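(* Let $\mathbf A$ be an integral interior $r\ell uz$-groupoid and $\mathbf B$ a finite partial subalgebra of $\mathbf A$. Then $\mathbf F^+_{\mathbf A,\mathbf B^0}$ is finite. Moreover, if $\mathbf A$ is zero-bounded (i.e. $0\le x$ for all $x\in A$), then so is $\mathbf F^+_{\mathbf A,\mathbf B^0}$ (its constant $0$ is its least element).
   Context: An $r\ell uz$-groupoid is an algebra $(A,\wedge,\vee,\cdot,\backslash,/,1,0)$ with $(A,\wedge,\vee)$ a lattice (order $\le$), $(A,\cdot,1)$ a unital groupoid (binary operation, not necessarily associative, with two-sided unit $1$), $0\in A$ arbitrary, and $x\cdot y\le z\iff y\le x\backslash z\iff x\le z/y$. An interior one has in addition a unary $!$ with $1\le !1$, $!x\cdot!y\le !(x\cdot y)$, $!x\le x$, $!x\le !!x$, $x\le y\Rightarrow !x\le !y$; integral means $x\le 1$ for all $x$. A partial subalgebra $\mathbf B$ of $\mathbf A$ is a subset $B\subseteq A$ with $f^{\mathbf B}(\vec b)=f^{\mathbf A}(\vec b)$ if this lies in $B$, undefined otherwise. $\mathbf B^0$ denotes the partial subalgebra of $\mathbf A$ with universe $B\cup\{0^{\mathbf A}\}$. An enriched $ruz$-frame is $\mathbf F=(G,T,N,K,\epsilon)$ where $(G,\cdot,\varepsilon)$ is a unital groupoid, $T$ a set, $N\subseteq G\times T$ a nuclear relation (for all $x,y\in G$, $z\in T$ there exist $x\backslash\!\!\backslash z,\ z/\!\!/y\in T$ with $x\cdot y\,N\,z\iff y\,N\,x\backslash\!\!\backslash z\iff x\,N\,z/\!\!/y$),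 $K$ a sub-unital-groupoid of $G$, and $\epsilon\in T$. For $X\subseteq G$, $Y\subseteq T$: $X^{\rhd}=\{t\in T\mid \forall x\in X\,(xNt)\}$, $Y^{\lhd}=\{g\in G\mid\forall y\in Y\,(gNy)\}$, $\gamma_N(X)=X^{\rhd\lhd}$; $X$ closed if $\gamma_N(X)=X$. $\mathbf F^+$ has universe the closed sets, with $X\wedge Y=X\cap Y$, $X\vee Y=\gamma_N(X\cup Y)$, $X\cdot Y=\gamma_N(X\circ Y)$ where $X\circ Y=\{x\cdot y\}$, $X\backslash Y=\{z\mid X\circ\{z\}\subseteq Y\}$, $Y/X=\{z\mid\{z\}\circ X\subseteq Y\}$, $!X=\gamma_N(X\cap K)$, unit $\gamma_N(\{\varepsilon\})$, zero $\{\epsilon\}^{\lhd}$. For a partial subalgebra $\mathbf C$ of $\mathbf A$ (here $\mathbf C=\mathbf B^0$): $G_C$ is the sub-unital-groupoid of $(A,\cdot,1)$ generated by $C$; $U_{G_C}$ the set of unary linear polynomials over $G_C$ (maps $G_C\to G_C$ given by a groupoid term in which one variable occurs exactly once and other leaves are in $G_C$, including $\mathrm{id}$); $T_C=U_{G_C}\times C$; $x\,N_C\,(u,c)$ iff $u(x)\le^{\mathbf A}c$; $K_C$ the sub-unital-groupoid generated by $\{!^{\mathbf A}c\mid c\in C,\ !^{\mathbf A}c\in C\}$. Then $\mathbf F_{\mathbf A,\mathbf B^0}=(G_{B^0},T_{B^0},N_{B^0},K_{B^0},\epsilon)$ with $\epsilon=(\mathrm{id},0^{\mathbf A})$. *)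

From Stdlib Require Import List.
Import ListNotations.
Set Implicit Arguments.

Record IRLUZ := {
  car : Type;
  meet : car -> car -> car;
  join : car -> car -> car;
  mul  : car -> car -> car;
  ldiv : car -> car -> car;
  rdiv : car -> car -> car;
  one  : car;
  zero : car;
  bang : car -> car;
  meet_comm : forall x y, meet x y = meet y x;
  meet_assoc : forall x y z, meet x (meet y z) = meet (meet x y) z;
  join_comm : forall x y, join x y = join y x;
  join_assoc : forall x y z, join x (join y z) = join (join x y) z;
  meet_join_absorb : forall x y, meet x (join x y) = x;
  join_meet_absorb : forall x y, join x (meet x y) = x;
  mul_1l : forall x, mul one x = x;
  mul_1r : forall x, mul x one = x;
  (* residuation, with x <= y := meet x y = x *)
  resid_l : forall x y z, meet (mul x y) z = mul x y <-> meet y (ldiv x z) = y;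
  resid_r : forall x y z, meet (mul x y) z = mul x y <-> meet x (rdiv z y) = x;
  bang_one : meet one (bang one) = one;
  bang_mul : forall x y, meet (mul (bang x) (bang y)) (bang (mul x y)) = mul (bang x) (bang y);
  bang_deflat : forall x, meet (bang x) x = bang x;
  bang_idem : forall x, meet (bang x) (bang (bang x)) = bang x;
  bang_mono : forall x y, meet x y = x -> meet (bang x) (bang y) = bang x
}.

Definition le (A : IRLUZ) (x y : car A) : Prop := meet A x y = x.

Definition integral (A : IRLUZ) : Prop := forall x, le A x (one A).
Definition zero_bounded (A : IRLUZ) : Prop := forall x, le A (zero A) x.

Definition finite_pred (T : Type) (P : T -> Prop) : Prop :=
  exists l : list T, forall x, P x <-> In x l.

Section Frame.
Variable A : IRLUZ.
Variable B : car A -> Prop.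

Definition C0 (x : car A) : Prop := B x \/ x = zero A.

Inductive GC : car A -> Prop :=
| GC_gen : forall x, C0 x -> GC x
| GC_one : GC (one A)
| GC_mul : forall x y, GC x -> GC y -> GC (mul A x y).

(** unary linear polynomials (terms), constants in G_C checked separately *)
Inductive lpoly : Type :=
| Hole : lpoly
| PL : car A -> lpoly -> lpoly
| PR : lpoly -> car A -> lpoly.

Fixpoint lp_eval (p : lpoly) (x : car A) : car A :=
  match p with
  | Hole => x
  | PL a q => mul A a (lp_eval q x)
  | PR q a => mul A (lp_eval q x) a
  end.

Fixpoint lp_ok (p : lpoly) : Prop :=
  match p with
  | Hole => True
  | PL a q => GC a /\ lp_ok q
  | PR q a => GC a /\ lp_ok q
  end.

Definition TC (t : lpoly * car A) : Prop := lp_ok (fst t) /\ C0 (snd t).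

Definition NC (x : car A) (t : lpoly * car A) : Prop := le A (lp_eval (fst t) x) (snd t).

Definition rhd (X : car A -> Prop) (t : lpoly * car A) : Prop :=
  TC t /\ forall x, X x -> NC x t.

Definition lhd (Y : lpoly * car A -> Prop) (g : car A) : Prop :=
  GC g /\ forall t, Y t -> NC g t.

Definition closed (X : car A -> Prop) : Prop :=
  forall g, X g <-> lhd (rhd X) g.

(** the distinguished element epsilon = (id, 0^A) and the constant 0 of F^+ *)
Definition eps : lpoly * car A := (Hole, zero A).
Definition Fzero (g : car A) : Prop := lhd (fun t => t = eps) g.

Definition Fplus_finite : Prop :=
  exists L : list (car A -> Prop),
    forall X, closed X -> exists Y, In Y L /\ forall g, X g <-> Y g.

Definition Fplus_zero_bounded : Prop :=
  forall X, closed X -> forall g, Fzero g -> X g.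

End Frame.

From Stdlib Require Import List Arith Lia Classical ClassicalEpsilon.
Import ListNotations.

(* Elements of G_C are values of binary trees whose leaves are labelled by 0, 1 and
   the finitely many elements of B.  In an integral algebra a product lies below each
   factor, so if [f] embeds homeomorphically into [t] then [val t <= val f]: for each
   c in C the trees with value below c form an upward-closed set, which by Kruskal's
   tree theorem has a finite basis.  Whether [u(g) <= c] for a linear polynomial u is
   therefore decided by which subtrees of these finitely many basis trees embed into a
   tree of g, and every closed set is a union of classes of this finite-index
   equivalence. *)

Definition good {X : Type} (R : X -> X -> Prop) (s : nat -> X) : Prop :=
  exists i j, i < j /\ R (s i) (s j).

Definition bad {X : Type} (R : X -> X -> Prop) (s : nat -> X) : Prop :=
  forall i j, i < j -> ~ R (s i) (s j).

Definition wqo {X : Type} (D : X -> Prop) (R : X -> X -> Prop) : Prop :=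
  forall s, (forall n, D (s n)) -> good R s.

Lemma not_good_bad {X : Type} (R : X -> X -> Prop) (s : nat -> X) :
  ~ good R s -> bad R s.
Proof. intros Hng i j Hij HR. apply Hng. exists i, j. auto. Qed.

Lemma pigeonhole (k : nat) (s : nat -> nat) : (forall n, s n < k) -> good eq s.
Proof.
  revert s. induction k as [|k IH]; intros s Hs.
  - specialize (Hs 0). lia.
  - destruct (classic (exists i j, i < j /\ s i = k /\ s j = k))
      as [[i [j [Hij [Hi Hj]]]]|Hno].
    + exists i, j. split; congruence.
    + destruct (classic (exists i, s i = k)) as [[i Hi]|Hnone].
      * destruct (IH (fun n => s (S i + n))) as [a [b [Hab Hs']]].
        -- intro n. assert (s (S i + n) <> k)
             by (intro E; apply Hno; exists i, (S i + n); split; [lia|auto]).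
           specialize (Hs (S i + n)). lia.
        -- exists (S i + a), (S i + b). split; [lia|auto].
      * apply IH. intro n. assert (s n <> k) by (intro E; apply Hnone; eauto).
        specialize (Hs n). lia.
Qed.

Lemma chain_of_succ {X : Type} (R : X -> X -> Prop) (x : nat -> X) :
  (forall a b c, R a b -> R b c -> R a c) -> (forall i, R (x i) (x (S i))) ->
  forall i j, i < j -> R (x i) (x j).
Proof.
  intros Rtrans Hsucc i j Hij.
  induction Hij as [|j Hij IH]; [apply Hsucc|].
  apply (Rtrans _ _ _ IH (Hsucc j)).
Qed.

Lemma strictly_increasing_of_succ (phi : nat -> nat) :
  (forall i, phi i < phi (S i)) -> forall i j, i < j -> phi i < phi j.
Proof. apply chain_of_succ. exact Nat.lt_trans. Qed.

Lemma infinite_subsequence (Q : nat -> Prop) :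
  (forall M, exists n, M <= n /\ Q n) ->
  exists phi, (forall i j, i < j -> phi i < phi j) /\ forall i, Q (phi i).
Proof.
  intros HQ. destruct (choice _ HQ) as [f Hf].
  exists (fun i => Nat.iter i (fun p => f (S p)) (f 0)). split.
  - apply strictly_increasing_of_succ. intro i.
    exact (proj1 (Hf (S (Nat.iter i (fun p => f (S p)) (f 0))))).
  - intros [|i]; apply Hf.
Qed.

(* Either infinitely many terms have no R-larger successor, and these form a bad
   subsequence, or from some point on every term has one, and iterating gives the chain. *)
Lemma wqo_chain {X : Type} (D : X -> Prop) (R : X -> X -> Prop) :
  (forall a b c, R a b -> R b c -> R a c) -> wqo D R ->
  forall a : nat -> X, (forall n, D (a n)) ->
  exists psi, (forall i j, i < j -> psi i < psi j) /\
              forall i j, i < j -> R (a (psi i)) (a (psi j)).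
Proof.
  intros Rtrans W a Ha.
  destruct (classic (forall M, exists n, M <= n /\ forall m, n < m -> ~ R (a n) (a m)))
    as [Hterm|Hfin].
  - destruct (infinite_subsequence _ Hterm) as [phi [Hphi Hbad]].
    destruct (W (fun i => a (phi i))) as [i [j [Hij HR]]]; [auto|].
    exfalso. exact (Hbad i (phi j) (Hphi i j Hij) HR).
  - apply not_all_ex_not in Hfin. destruct Hfin as [M HM].
    assert (Hsucc : forall n, exists m, M <= n -> n < m /\ R (a n) (a m)).
    { intro n. destruct (classic (M <= n)) as [Hn|Hn]; [|exists 0; lia].
      apply NNPP. intro Hno. apply HM. exists n. split; [exact Hn|].
      intros m Hm HR. apply Hno. exists m. auto. }
    destruct (choice _ Hsucc) as [g Hg].
    set (psi := fun i => Nat.iter i g M).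
    assert (HM' : forall i, M <= psi i).
    { induction i as [|i IH]; [apply le_n|].
      change (M <= g (psi i)). destruct (Hg _ IH). lia. }
    exists psi. split.
    + apply strictly_increasing_of_succ. intro i. apply (Hg _ (HM' i)).
    + apply (chain_of_succ R (fun i => a (psi i)) Rtrans). intro i. apply (Hg _ (HM' i)).
Qed.

Lemma wqo_pair {X : Type} (D : X -> Prop) (R : X -> X -> Prop) :
  (forall a b c, R a b -> R b c -> R a c) -> wqo D R ->
  forall a b : nat -> X, (forall n, D (a n)) -> (forall n, D (b n)) ->
  exists i j, i < j /\ R (a i) (a j) /\ R (b i) (b j).
Proof.
  intros Rtrans W a b Ha Hb.
  destruct (wqo_chain D R Rtrans W a Ha) as [psi [Hpsi Hchain]].
  destruct (W (fun i => b (psi i))) as [i [j [Hij HR]]]; [auto|].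
  exists (psi i), (psi j). auto.
Qed.

Lemma exists_minimal {X : Type} (f : X -> nat) (P : X -> Prop) (x : X) :
  P x -> exists y, P y /\ forall z, P z -> f y <= f z.
Proof.
  remember (f x) as n eqn:En. revert x En.
  induction n as [n IH] using lt_wf_ind. intros x En Px.
  destruct (classic (exists z, P z /\ f z < n)) as [[z [Pz Hz]]|Hno].
  - exact (IH _ Hz z eq_refl Pz).
  - exists x. split; [exact Px|]. intros z Pz.
    apply NNPP. intro Hlt. apply Hno. exists z. split; [exact Pz|lia].
Qed.

Lemma dependent_choice_list {X : Type} (x0 : X) (Inv : list X -> Prop)
  (Q : list X -> X -> Prop) :
  Inv [] -> (forall l, Inv l -> exists x, Q l x /\ Inv (l ++ [x])) ->
  exists s : nat -> X, forall n, Q (map s (seq 0 n)) (s n) /\ Inv (map s (seq 0 (S n))).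
Proof.
  intros H0 HS.
  assert (Hnext : forall l, exists x, Inv l -> Q l x /\ Inv (l ++ [x])).
  { intro l. destruct (classic (Inv l)) as [Hl|Hl].
    - destruct (HS l Hl) as [x Hx]. eauto.
    - exists x0. contradiction. }
  destruct (choice _ Hnext) as [next Hn].
  set (pref := fun n => Nat.iter n (fun l => l ++ [next l]) []).
  assert (HI : forall n, Inv (pref n)).
  { induction n as [|n IH]; [exact H0|apply (Hn _ IH)]. }
  exists (fun n => next (pref n)).
  assert (Hp : forall n, pref n = map (fun n => next (pref n)) (seq 0 n)).
  { induction n as [|n IH]; [reflexivity|].
    rewrite seq_S, map_app, <- IH. reflexivity. }
  intro n. rewrite <- !Hp. apply (Hn _ (HI n)).
Qed.

Lemma nth_map_seq {X : Type} (s : nat -> X) (n i : nat) (d : X) :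
  i < n -> nth i (map s (seq 0 n)) d = s i.
Proof.
  intro Hi. rewrite (nth_indep _ d (s 0)) by (rewrite length_map, length_seq; lia).
  rewrite map_nth, seq_nth by lia. reflexivity.
Qed.

Inductive tree : Type := Leaf (n : nat) | Node (a b : tree).

Fixpoint leaves_lt (k : nat) (t : tree) : Prop :=
  match t with Leaf n => n < k | Node a b => leaves_lt k a /\ leaves_lt k b end.

Fixpoint tree_size (t : tree) : nat :=
  match t with Leaf _ => 1 | Node a b => S (tree_size a + tree_size b) end.

Inductive emb : tree -> tree -> Prop :=
| emb_Leaf n : emb (Leaf n) (Leaf n)
| emb_l f t1 t2 : emb f t1 -> emb f (Node t1 t2)
| emb_r f t1 t2 : emb f t2 -> emb f (Node t1 t2)
| emb_Node f1 f2 t1 t2 : emb f1 t1 -> emb f2 t2 -> emb (Node f1 f2) (Node t1 t2).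

Lemma emb_refl t : emb t t.
Proof. induction t; [apply emb_Leaf|apply emb_Node; auto]. Qed.

Lemma emb_trans a b c : emb a b -> emb b c -> emb a c.
Proof.
  intros Hab Hbc. revert a Hab. induction Hbc; intros a Hab.
  - exact Hab.
  - apply emb_l; auto.
  - apply emb_r; auto.
  - inversion Hab; subst; [apply emb_l|apply emb_r|apply emb_Node]; auto.
Qed.

Lemma emb_Node_iff f t1 t2 : emb f (Node t1 t2) <->
  emb f t1 \/ emb f t2 \/ exists f1 f2, f = Node f1 f2 /\ emb f1 t1 /\ emb f2 t2.
Proof.
  split.
  - intro H; inversion H; subst; eauto 10.
  - intros [H|[H|[f1 [f2 [-> [H1 H2]]]]]]; [apply emb_l|apply emb_r|apply emb_Node]; auto.
Qed.

Definition child (t u : tree) : Prop := exists v, u = Node t v \/ u = Node v t.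

Lemma emb_child t u : child t u -> emb t u.
Proof. intros [v [->| ->]]; [apply emb_l|apply emb_r]; apply emb_refl. Qed.

Lemma tree_size_child t u : child t u -> tree_size t < tree_size u.
Proof. intros [v [->| ->]]; cbn; lia. Qed.

Lemma leaves_lt_child k t u : child t u -> leaves_lt k u -> leaves_lt k t.
Proof. intros [v [->| ->]]; cbn; tauto. Qed.

(* Pigeonhole on the labels: two equal leaves embed into each other. *)
Lemma bad_eventually_Node k m : (forall n, leaves_lt k (m n)) -> bad emb m ->
  exists M, forall n, M <= n -> exists a b, m n = Node a b.
Proof.
  intros Hok Hbad. apply NNPP. intro Hno.
  assert (Hinf : forall M, exists n, M <= n /\ exists l, m n = Leaf l).
  { intro M. apply NNPP. intro HM. apply Hno. exists M. intros n Hn.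
    destruct (m n) as [l|a b] eqn:E; [|eauto].
    exfalso. apply HM. exists n. eauto. }
  destruct (infinite_subsequence _ Hinf) as [phi [Hphi Hleaf]].
  set (label := fun i => match m (phi i) with Leaf l => l | Node _ _ => 0 end).
  destruct (pigeonhole k label) as [i [j [Hij Hl]]].
  - intro n. unfold label. destruct (Hleaf n) as [l El].
    specialize (Hok (phi n)). rewrite El in *. exact Hok.
  - apply (Hbad (phi i) (phi j) (Hphi i j Hij)).
    unfold label in Hl. destruct (Hleaf i) as [li Ei], (Hleaf j) as [lj Ej].
    rewrite Ei, Ej in *. subst. apply emb_Leaf.
Qed.

Definition agrees (l : list tree) (s : nat -> tree) : Prop :=
  forall i, i < length l -> nth i l (Leaf 0) = s i.

Lemma agrees_snoc l s : agrees l s -> agrees (l ++ [s (length l)]) s.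
Proof.
  intros Hl i Hi. rewrite length_app in Hi; cbn in Hi.
  destruct (Nat.lt_ge_cases i (length l)) as [Hlt|Hge].
  - rewrite app_nth1 by exact Hlt. apply Hl, Hlt.
  - rewrite app_nth2 by exact Hge. replace i with (length l) by lia.
    rewrite Nat.sub_diag. reflexivity.
Qed.

Lemma agrees_map_seq m n s : agrees (map m (seq 0 n)) s <-> forall i, i < n -> s i = m i.
Proof.
  unfold agrees. rewrite length_map, length_seq.
  split; intros H i Hi; pose proof (nth_map_seq m n i (Leaf 0) Hi) as E.
  - rewrite <- E. symmetry. exact (H i Hi).
  - rewrite E. symmetry. exact (H i Hi).
Qed.

Section MinimalBad.

Variable k : nat.

Definition minimal_bad (m : nat -> tree) : Prop :=
  (forall n, leaves_lt k (m n)) /\ bad emb m /\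
  forall n s, (forall n, leaves_lt k (s n)) -> bad emb s ->
    (forall i, i < n -> s i = m i) -> tree_size (m n) <= tree_size (s n).

Definition extendable (l : list tree) : Prop :=
  exists s, (forall n, leaves_lt k (s n)) /\ bad emb s /\ agrees l s.

(* Nash-Williams: choose each term of size minimal among all bad continuations. *)
Lemma minimal_bad_exists s0 : (forall n, leaves_lt k (s0 n)) -> bad emb s0 ->
  exists m, minimal_bad m.
Proof.
  intros Hok0 Hbad0.
  destruct (dependent_choice_list (Leaf 0) extendable
     (fun l x => extendable (l ++ [x]) /\
                 forall y, extendable (l ++ [y]) -> tree_size x <= tree_size y))
     as [m Hm].
  - exists s0. split; [exact Hok0|split; [exact Hbad0|]]. intros i Hi. cbn in Hi. lia.
  - intros l [s [Hok [Hbad Hs]]].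
    destruct (exists_minimal tree_size (fun y => extendable (l ++ [y])) (s (length l)))
      as [x [Hx Hmin]].
    + exists s. split; [exact Hok|split; [exact Hbad|apply agrees_snoc, Hs]].
    + exists x. auto.
  - assert (Hpref : forall n, exists s, (forall n, leaves_lt k (s n)) /\ bad emb s /\
                      forall i, i <= n -> s i = m i).
    { intro n. destruct (proj2 (Hm n)) as [s [Hok [Hbad Hs]]].
      exists s. split; [exact Hok|split; [exact Hbad|]].
      intros i Hi. apply (proj1 (agrees_map_seq m (S n) s) Hs). lia. }
    exists m. split; [|split].
    + intro n. destruct (Hpref n) as [s [Hok [_ Hs]]]. rewrite <- Hs; auto.
    + intros i j Hij. destruct (Hpref j) as [s [_ [Hbad Hs]]].
      rewrite <- (Hs i), <- (Hs j) by lia. auto.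
    + intros n s Hok Hbad Hs. apply (proj2 (proj1 (Hm n))).
      exists s. split; [exact Hok|split; [exact Hbad|]].
      apply (proj2 (agrees_map_seq m n s)) in Hs.
      pose proof (agrees_snoc _ _ Hs) as Hsnoc.
      rewrite length_map, length_seq in Hsnoc. exact Hsnoc.
Qed.

Variable m : nat -> tree.
Hypothesis m_minimal : minimal_bad m.

(* A bad sequence of children [c j], child of [m (phi j)], could be spliced after
   [m 0, ..., m (i0 - 1)] with [i0] the least [phi j], contradicting minimality. *)
Lemma children_wqo : wqo (fun t => exists i, child t (m i)) emb.
Proof.
  destruct m_minimal as [m_ok [m_bad m_min]].
  intros c Hc. apply NNPP. intro Hng.
  pose proof (not_good_bad _ _ Hng) as c_bad.
  destruct (choice _ Hc) as [phi Hphi].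
  destruct (exists_minimal (fun i => i) (fun i => exists j, phi j = i) (phi 0))
    as [i0 [[j0 Hj0] Hmin]]; [eauto|].
  set (s := fun x => if x <? i0 then m x else c (j0 + (x - i0))).
  assert (Hs1 : forall x, x < i0 -> s x = m x).
  { intros x Hx. unfold s. destruct (Nat.ltb_spec x i0); [reflexivity|lia]. }
  assert (Hs2 : forall x, i0 <= x -> s x = c (j0 + (x - i0))).
  { intros x Hx. unfold s. destruct (Nat.ltb_spec x i0); [lia|reflexivity]. }
  assert (s_ok : forall x, leaves_lt k (s x)).
  { intro x. destruct (Nat.lt_ge_cases x i0).
    - rewrite Hs1 by assumption. apply m_ok.
    - rewrite Hs2 by assumption. apply (leaves_lt_child k _ _ (Hphi _)), m_ok. }
  assert (s_bad : bad emb s).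
  { intros x y Hxy He. destruct (Nat.lt_ge_cases y i0).
    - rewrite !Hs1 in He by lia. exact (m_bad x y Hxy He).
    - rewrite (Hs2 y) in He by assumption. destruct (Nat.lt_ge_cases x i0).
      + rewrite Hs1 in He by assumption.
        set (j := j0 + (y - i0)) in *.
        assert (i0 <= phi j) by (apply Hmin; eauto).
        apply (m_bad x (phi j)); [lia|].
        exact (emb_trans _ _ _ He (emb_child _ _ (Hphi j))).
      + rewrite Hs2 in He by assumption.
        apply (c_bad (j0 + (x - i0)) (j0 + (y - i0))); [lia|exact He]. }
  pose proof (m_min i0 s s_ok s_bad Hs1) as Hle.
  rewrite Hs2, Nat.sub_diag, Nat.add_0_r in Hle by lia.
  pose proof (tree_size_child _ _ (Hphi j0)). subst i0. lia.
Qed.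

Lemma minimal_bad_absurd : False.
Proof.
  destruct m_minimal as [m_ok [m_bad _]].
  destruct (bad_eventually_Node k m m_ok m_bad) as [M HM].
  set (lft := fun t => match t with Node a _ => a | Leaf _ => t end).
  set (rgt := fun t => match t with Node _ b => b | Leaf _ => t end).
  destruct (wqo_pair _ _ emb_trans children_wqo
              (fun i => lft (m (M + i))) (fun i => rgt (m (M + i))))
    as [i [j [Hij [Hl Hr]]]].
  - intro n. exists (M + n). destruct (HM (M + n)) as [a [b E]]; [lia|].
    rewrite E. exists b. left. reflexivity.
  - intro n. exists (M + n). destruct (HM (M + n)) as [a [b E]]; [lia|].
    rewrite E. exists a. right. reflexivity.
  - apply (m_bad (M + i) (M + j)); [lia|].
    destruct (HM (M + i)) as [a [b Ei]]; [lia|].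
    destruct (HM (M + j)) as [a' [b' Ej]]; [lia|].
    cbn in Hl, Hr. rewrite Ei, Ej in *. apply emb_Node; assumption.
Qed.

End MinimalBad.

Theorem kruskal k : wqo (leaves_lt k) emb.
Proof.
  intros s Hs. apply NNPP. intro Hng.
  destruct (minimal_bad_exists k s Hs (not_good_bad _ _ Hng)) as [m Hm].
  exact (minimal_bad_absurd k m Hm).
Qed.

Lemma finite_basis k (P : tree -> Prop) : (forall t, P t -> leaves_lt k t) ->
  exists F, (forall f, In f F -> P f) /\ forall t, P t -> exists f, In f F /\ emb f t.
Proof.
  intros HP. apply NNPP. intro Hno.
  destruct (dependent_choice_list (Leaf 0) (fun l => forall x, In x l -> P x)
              (fun l x => P x /\ forall f, In f l -> ~ emb f x)) as [s Hs].
  - intros x [].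
  - intros l Hl.
    assert (Hnot : ~ forall t, P t -> exists f, In f l /\ emb f t)
      by (intro H; apply Hno; eauto).
    apply not_all_ex_not in Hnot. destruct Hnot as [t Ht].
    apply imply_to_and in Ht. destruct Ht as [Pt Ht].
    exists t. split.
    + split; [exact Pt|]. intros f Hf He. apply Ht. eauto.
    + intros x Hx. apply in_app_or in Hx. destruct Hx as [Hx|[<-|[]]]; auto.
  - destruct (kruskal k s) as [i [j [Hij He]]].
    + intro n. apply HP, (proj1 (Hs n)).
    + apply (proj2 (proj1 (Hs j)) (s i)); [|exact He].
      apply in_map, in_seq. lia.
Qed.

Inductive context : Type :=
| CHole
| CL (t : tree) (c : context)
| CR (c : context) (t : tree).

Fixpoint plug (c : context) (x : tree) : tree :=
  match c with
  | CHole => x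
  | CL t c => Node t (plug c x)
  | CR c t => Node (plug c x) t
  end.

Fixpoint subtrees (t : tree) : list tree :=
  t :: match t with Leaf _ => [] | Node a b => subtrees a ++ subtrees b end.

Lemma subtrees_self t : In t (subtrees t).
Proof. destruct t; left; reflexivity. Qed.

Definition subtree_closed (S : list tree) : Prop :=
  forall a b, In (Node a b) S -> In a S /\ In b S.

Lemma subtree_closed_subtrees t : subtree_closed (subtrees t).
Proof.
  induction t as [n|t1 IH1 t2 IH2]; intros a b H; cbn in H.
  - destruct H as [H|[]]. discriminate.
  - destruct H as [H|H].
    + injection H as -> ->. split; right; apply in_or_app; [left|right]; apply subtrees_self.
    + cbn. apply in_app_or in H. destruct H as [H|H].
      * destruct (IH1 a b H). split; right; apply in_or_app; auto.
      * destruct (IH2 a b H). split; right; apply in_or_app; auto.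
Qed.

Lemma subtree_closed_flat_map (F : list tree) : subtree_closed (flat_map subtrees F).
Proof.
  intros a b H. apply in_flat_map in H. destruct H as [t [Ht H]].
  destruct (subtree_closed_subtrees t a b H). split; apply in_flat_map; eauto.
Qed.

Lemma emb_plug S : subtree_closed S ->
  forall x y, (forall h, In h S -> emb h x -> emb h y) ->
  forall c h, In h S -> emb h (plug c x) -> emb h (plug c y).
Proof.
  intros HS x y Hxy c. induction c as [|t c IH|c IH t]; intros h Hh; cbn; auto;
    rewrite !emb_Node_iff; intros [H|[H|[f1 [f2 [-> [H1 H2]]]]]]; auto;
    right; right; exists f1, f2; repeat split; auto;
    destruct (HS f1 f2 Hh); auto.
Qed.

(* Sets respecting the equivalence "same [tau]-tests among [hs]" are unions of
   classes, and there are at most [2 ^ length hs] classes. *)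
Lemma finitely_many_saturated {T H : Type} (tau : T -> H -> Prop) (hs : list H) :
  forall D : T -> Prop, exists L : list (T -> Prop),
  forall X : T -> Prop, (forall g, X g -> D g) ->
    (forall g g', D g' -> (forall h, In h hs -> (tau g h <-> tau g' h)) -> X g -> X g') ->
    exists Y, In Y L /\ forall g, X g <-> Y g.
Proof.
  induction hs as [|h hs IH]; intro D.
  - exists [D; fun _ => False]. intros X HXD HX.
    destruct (classic (exists g, X g)) as [[g Xg]|Hno].
    + exists D. split; [left; reflexivity|].
      intro g'. split; [apply HXD|].
      intro Dg'. apply (HX g g'); [exact Dg'|intros _ []|exact Xg].
    + exists (fun _ => False). split; [right; left; reflexivity|].
      intro g'. split; [intro Xg'; apply Hno; eauto|intros []].
  - destruct (IH (fun g => D g /\ tau g h)) as [L1 HL1].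
    destruct (IH (fun g => D g /\ ~ tau g h)) as [L2 HL2].
    exists (map (fun Y g => fst Y g \/ snd Y g) (list_prod L1 L2)). intros X HXD HX.
    destruct (HL1 (fun g => X g /\ tau g h)) as [Y1 [HY1 E1]].
    { intros g [Xg Tg]. auto. }
    { intros g g' [Dg' Tg'] Hsame [Xg Tg]. split; [|exact Tg'].
      apply (HX g g' Dg'); [|exact Xg]. intros h0 [<-|Hh0]; [tauto|auto]. }
    destruct (HL2 (fun g => X g /\ ~ tau g h)) as [Y2 [HY2 E2]].
    { intros g [Xg Tg]. auto. }
    { intros g g' [Dg' Tg'] Hsame [Xg Tg]. split; [|exact Tg'].
      apply (HX g g' Dg'); [|exact Xg]. intros h0 [<-|Hh0]; [tauto|auto]. }
    exists (fun g => Y1 g \/ Y2 g). split.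
    + apply (in_map (fun Y g => fst Y g \/ snd Y g) _ (Y1, Y2)), in_prod; assumption.
    + intro g. rewrite <- E1, <- E2. destruct (classic (tau g h)); tauto.
Qed.

Section Order.

Variable A : IRLUZ.

Lemma le_refl x : le A x x.
Proof.
  unfold le. pose proof (meet_join_absorb A x (meet A x x)) as H.
  rewrite join_meet_absorb in H. exact H.
Qed.

Lemma le_trans x y z : le A x y -> le A y z -> le A x z.
Proof.
  unfold le. intros Hxy Hyz. rewrite <- Hxy at 1. rewrite <- meet_assoc, Hyz. exact Hxy.
Qed.

Lemma mul_le_mono_l x y z : le A x y -> le A (mul A z x) (mul A z y).
Proof.
  intro Hxy. apply resid_l.
  apply (le_trans _ _ _ Hxy). apply resid_l, le_refl.
Qed.

Lemma mul_le_mono_r x y z : le A x y -> le A (mul A x z) (mul A y z).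
Proof.
  intro Hxy. apply resid_r.
  apply (le_trans _ _ _ Hxy). apply resid_r, le_refl.
Qed.

Hypothesis A_integral : integral A.

Lemma mul_le_l x y : le A (mul A x y) x.
Proof. rewrite <- (mul_1r A x) at 2. apply mul_le_mono_l, A_integral. Qed.

Lemma mul_le_r x y : le A (mul A x y) y.
Proof. rewrite <- (mul_1l A y) at 2. apply mul_le_mono_r, A_integral. Qed.

Lemma lp_eval_le p x : le A (lp_eval p x) x.
Proof.
  induction p as [|a p IH|p IH a]; cbn.
  - apply le_refl.
  - exact (le_trans _ _ _ (mul_le_r _ _) IH).
  - exact (le_trans _ _ _ (mul_le_l _ _) IH).
Qed.

End Order.

Section Evaluation.

Variable A : IRLUZ.
Variable al : list (car A).

Fixpoint eval_tree (t : tree) : car A :=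
  match t with
  | Leaf n => nth n al (one A)
  | Node a b => mul A (eval_tree a) (eval_tree b)
  end.

Lemma emb_eval_le f t : integral A -> emb f t -> le A (eval_tree t) (eval_tree f).
Proof.
  intros HI H. induction H; cbn.
  - apply le_refl.
  - exact (le_trans _ _ _ _ (mul_le_l A HI _ _) IHemb).
  - exact (le_trans _ _ _ _ (mul_le_r A HI _ _) IHemb).
  - exact (le_trans _ _ _ _ (mul_le_mono_r _ _ _ _ IHemb1) (mul_le_mono_l _ _ _ _ IHemb2)).
Qed.

Lemma eval_bases k (cs : list (car A)) : exists F, forall c, In c cs ->
  forall t, leaves_lt k t -> le A (eval_tree t) c ->
  exists f, In f F /\ le A (eval_tree f) c /\ emb f t.
Proof.
  induction cs as [|c cs [F' HF']].
  - exists []. intros c [].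
  - destruct (finite_basis k (fun t => leaves_lt k t /\ le A (eval_tree t) c))
      as [F [HF1 HF2]]; [tauto|].
    exists (F ++ F'). intros c' [<-|Hc'] t Ht Hle.
    + destruct (HF2 t (conj Ht Hle)) as [f [Hf He]].
      exists f. split; [apply in_or_app; left; exact Hf|split; [apply HF1, Hf|exact He]].
    + destruct (HF' c' Hc' t Ht Hle) as [f [Hf Hrest]].
      exists f. split; [apply in_or_app; right; exact Hf|exact Hrest].
Qed.

End Evaluation.

Section Frame.

Variable A : IRLUZ.
Hypothesis A_integral : integral A.
Variable B : car A -> Prop.
Variable lB : list (car A).
Hypothesis B_list : forall x, B x <-> In x lB.

(* Leaf [n] of a tree stands for the [n]-th element of [al]: [0], [1], then [B]. *)
Let al := zero A :: one A :: lB.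
Let k := length al.

Lemma GC_eval_tree t : leaves_lt k t -> GC A B (eval_tree A al t).
Proof.
  induction t as [n|a IHa b IHb].
  - intro Hn. change (GC A B (nth n al (one A))). pose proof (nth_In al (one A) Hn) as Hin.
    destruct Hin as [<-|[<-|Hin]].
    + apply GC_gen. right. reflexivity.
    + apply GC_one.
    + apply GC_gen. left. apply B_list, Hin.
  - intros [Ha Hb]. apply GC_mul; auto.
Qed.

Lemma eval_tree_of_GC g : GC A B g -> exists t, leaves_lt k t /\ eval_tree A al t = g.
Proof.
  induction 1 as [x [Bx| ->]| |x y _ [a [Ha <-]] _ [b [Hb <-]]].
  - apply B_list in Bx.
    destruct (In_nth al x (one A) (or_intror (or_intror Bx))) as [n [Hn Hx]].
    exists (Leaf n). auto.
  - exists (Leaf 0). cbn. split; [lia|reflexivity].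
  - exists (Leaf 1). cbn. split; [lia|reflexivity].
  - exists (Node a b). cbn. auto.
Qed.

Lemma context_of_lpoly p : lp_ok B p -> exists c,
  (forall x, eval_tree A al (plug c x) = lp_eval p (eval_tree A al x)) /\
  (forall x, leaves_lt k x -> leaves_lt k (plug c x)).
Proof.
  induction p as [|a p IH|p IH a]; cbn.
  - intros _. exists CHole. cbn. auto.
  - intros [Ha Hp]. destruct (IH Hp) as [c [Hc1 Hc2]].
    destruct (eval_tree_of_GC a Ha) as [ta [Hta <-]].
    exists (CL ta c). cbn. split; [intro x; rewrite Hc1; reflexivity|auto].
  - intros [Ha Hp]. destruct (IH Hp) as [c [Hc1 Hc2]].
    destruct (eval_tree_of_GC a Ha) as [ta [Hta <-]].
    exists (CR c ta). cbn. split; [intro x; rewrite Hc1; reflexivity|auto].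
Qed.

(* [u(g) <= c] is witnessed by a basis tree [f] of [c] embedding into [u] applied to
   a tree of [g]; by [emb_plug] this only depends on the subtrees of the basis
   embedding into the tree of [g]. *)
Lemma NC_emb_mono (F : list tree) :
  (forall c, C0 A B c -> forall t, leaves_lt k t -> le A (eval_tree A al t) c ->
     exists f, In f F /\ le A (eval_tree A al f) c /\ emb f t) ->
  forall t t', leaves_lt k t ->
  (forall h, In h (flat_map subtrees F) -> emb h t -> emb h t') ->
  forall u, TC B u -> NC (eval_tree A al t) u -> NC (eval_tree A al t') u.
Proof.
  intros HF t t' Ht Hsame [p c] [Hp Hc]. unfold NC; cbn.
  destruct (context_of_lpoly p Hp) as [cx [Hcx Hok]].
  rewrite <- !Hcx. intro Hle.
  destruct (HF c Hc _ (Hok t Ht) Hle) as [f [Hf [Hfc He]]].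
  assert (HfS : In f (flat_map subtrees F)) by (apply in_flat_map; eauto using subtrees_self).
  apply (emb_plug _ (subtree_closed_flat_map F) t t' Hsame cx f HfS) in He.
  exact (le_trans _ _ _ _ (emb_eval_le A al f _ A_integral He) Hfc).
Qed.

Lemma Fplus_finite_of_integral : Fplus_finite A B.
Proof.
  destruct (eval_bases A al k (zero A :: lB)) as [F HF].
  assert (HF0 : forall c, C0 A B c -> forall t, leaves_lt k t ->
     le A (eval_tree A al t) c -> exists f, In f F /\ le A (eval_tree A al f) c /\ emb f t).
  { intros c Hc. apply HF.
    destruct Hc as [Hc| ->]; [right; apply B_list, Hc|left; reflexivity]. }
  destruct (finitely_many_saturated (fun t h => emb h t) (flat_map subtrees F) (leaves_lt k))
    as [L HL].
  set (image := fun (Y : tree -> Prop) g =>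
                 exists t, leaves_lt k t /\ eval_tree A al t = g /\ Y t).
  exists (map image L). intros X HX.
  destruct (HL (fun t => leaves_lt k t /\ X (eval_tree A al t))) as [Y [HY HXY]].
  - intros t [Ht _]. exact Ht.
  - intros t t' Ht' Hsame [Ht Xt]. split; [exact Ht'|].
    apply HX. apply HX in Xt. destruct Xt as [_ Xt].
    split; [apply GC_eval_tree, Ht'|]. intros u Hu.
    apply (NC_emb_mono F HF0 t t' Ht); [|apply Hu|apply Xt, Hu].
    intros h Hh. apply Hsame, Hh.
  - exists (image Y). split; [apply in_map, HY|].
    intro g. split.
    + intro Xg. destruct (eval_tree_of_GC g (proj1 (proj1 (HX g) Xg))) as [t [Ht <-]].
      exists t. split; [exact Ht|split; [reflexivity|apply HXY; auto]].
    + intros [t [_ [<- Yt]]]. apply HXY, Yt.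
Qed.

End Frame.

(* [u(g) <= g <= 0 <= c] by integrality and zero-boundedness. *)
Lemma Fplus_zero_bounded_of_integral (A : IRLUZ) (B : car A -> Prop) :
  integral A -> zero_bounded A -> Fplus_zero_bounded A B.
Proof.
  intros HI HZ X HX g [Hg Hzero]. apply HX. split; [exact Hg|].
  intros [p c] [[Hp Hc] _]. unfold NC; cbn.
  specialize (Hzero (eps A) eq_refl). unfold NC, eps in Hzero; cbn in Hzero.
  exact (le_trans _ _ _ _ (lp_eval_le A HI p g) (le_trans _ _ _ _ Hzero (HZ c))).
Qed.

Theorem mainTheorem7 (A : IRLUZ) (B : car A -> Prop) :
  integral A ->
  finite_pred B ->
  Fplus_finite A B /\ (zero_bounded A -> Fplus_zero_bounded A B).
Proof.
  intros HI [lB HB]. split.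
  - exact (Fplus_finite_of_integral A HI B lB HB).
  - exact (Fplus_zero_bounded_of_integral A B HI).
Qed.
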